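(* Let $T$ be a tree with $n\geq 3$ vertices and maximum degree $\Delta$, and let $\delta_1$ be the minimum degree among the non-pendant vertices of $T$. Suppose that $m_{1,b}(T)=0$ for all $b\geq 4$ and that $\Delta-\delta_1\leq (2\delta_1-1)^{2}$. Then $GA(T)>ABC(T)$.
   Context: A vertex is pendant if it has degree $1$. $m_{a,b}(T)$ denotes the number of edges of $T$ joining a vertex of degree $a$ to a vertex of degree $b$. With $d_i$ the degree of vertex $v_i$, $GA(T)=\sum_{v_iv_j\in E(T)}\frac{2\sqrt{d_id_j}}{d_i+d_j}$ and $ABC(T)=\sum_{v_iv_j\in E(T)}\sqrt{\frac{d_i+d_j-2}{d_id_j}}$. *)

From HB Require Import structures.
From mathcomp Require Import all_boot all_order all_algebra.
From mathcomp Require Import reals.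
Set Implicit Arguments. Unset Strict Implicit. Unset Printing Implicit Defensive.
Import Order.TTheory GRing.Theory Num.Theory.

(* A finite simple graph on vertex type V is given by a relation [e]
   that is symmetric and irreflexive. *)

Definition deg (V : finType) (e : rel V) (x : V) : nat := #|[set y | e x y]|.

(* Number of edges: each unordered edge {x,y} gives two ordered pairs. *)
Definition nedges (V : finType) (e : rel V) : nat :=
  #|[set p : V * V | e p.1 p.2]| %/ 2.

Definition is_tree (V : finType) (e : rel V) : Prop :=
  symmetric e /\ irreflexive e /\ (forall x y : V, connect e x y)
  /\ nedges e = #|V| - 1.

Definition maxdeg (V : finType) (e : rel V) : nat := \max_(x : V) deg e x.

(* delta_1: minimum degree among non-pendant vertices (degree > 1).
   (#|V| is only a neutral element; the index set is nonempty for trees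
   with at least 3 vertices.) *)
Definition delta1 (V : finType) (e : rel V) : nat :=
  \big[minn/#|V|]_(x : V | 1 < deg e x) deg e x.

Definition m_ab (V : finType) (e : rel V) (a b : nat) : nat :=
  let c := #|[set p : V * V | [&& e p.1 p.2, deg e p.1 == a & deg e p.2 == b]]| in
  if a == b then c %/ 2 else c.

Local Open Scope ring_scope.

(* Sum over edges of a symmetric function of the endpoint degrees:
   half the sum over ordered adjacent pairs. *)
Definition edge_sum (R : realType) (V : finType) (e : rel V)
  (f : nat -> nat -> R) : R :=
  (\sum_(x : V) \sum_(y : V | e x y) f (deg e x) (deg e y)) / 2.

Definition GA (R : realType) (V : finType) (e : rel V) : R :=
  edge_sum e (fun a b : nat =>
    2 * Num.sqrt ((a * b)%:R) / (a + b)%:R).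

Definition ABC (R : realType) (V : finType) (e : rel V) : R :=
  edge_sum e (fun a b : nat =>
    Num.sqrt (((a + b)%:R - 2) / (a * b)%:R)).

From HB Require Import structures.
From mathcomp Require Import all_boot all_order all_algebra.
From mathcomp Require Import reals ring lra.
Set Implicit Arguments. Unset Strict Implicit. Unset Printing Implicit Defensive.
Import Order.TTheory GRing.Theory Num.Theory.

(* The inequality holds edge by edge: for degrees [a, b >= 1] the ABC term is
   smaller than the GA term exactly when [(a+b-2)(a+b)^2 < 4(ab)^2].  Edges at
   a pendant vertex have [b <= 3] by hypothesis, and this is a direct check.
   Every other edge has [delta_1 <= a <= b <= Delta], so [b - a <= (2a-1)^2],
   and writing [b = a + t] the polynomial inequality follows from
   [t^3 <= (2a-1)^2 t^2] and [(2a-1) t^2 <= (2a-1)^3 t]. *)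

Local Open Scope ring_scope.

Section EdgeInequality.

Variable R : realDomainType.

Lemma abc_ga_poly_ineq_gap (a b : nat) :
  (1 <= a <= b)%N -> (b - a <= (2 * a - 1) ^ 2)%N ->
  (a%:R + b%:R - 2) * (a%:R + b%:R) ^+ 2 < 4 * (a%:R * b%:R) ^+ 2 :> R.
Proof.
case/andP=> a_ge1 le_ab le_gap.
have -> : b = (a + (b - a))%N by rewrite subnKC.
set t := (b - a)%N in le_gap *.
have twoa_ge1 : (1 <= 2 * a)%N by rewrite mul2n -addnn (leq_trans a_ge1) ?leq_addr.
rewrite natrD; set x : R := a%:R; set y : R := t%:R.
have x_ge1 : 1 <= x by rewrite ler1n.
have y_ge0 : 0 <= y by exact: ler0n.
have le_gapR : y <= (2 * x - 1) ^+ 2.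
  by move: le_gap; rewrite -(ler_nat R) natrX (natrB _ twoa_ge1) natrM mulr1n.
have cubic : y ^+ 2 * y <= y ^+ 2 * (2 * x - 1) ^+ 2 by rewrite ler_wpM2l ?sqr_ge0.
have quadratic : (2 * x - 1) * y * y <= (2 * x - 1) * y * (2 * x - 1) ^+ 2.
  by rewrite ler_wpM2l // mulr_ge0 //; lra.
nra.
Qed.

Lemma abc_ga_poly_ineq_pendant (b : nat) : (1 <= b <= 3)%N ->
  (1%:R + b%:R - 2) * (1%:R + b%:R) ^+ 2 < 4 * (1%:R * b%:R) ^+ 2 :> R.
Proof. by case: b => [|[|[|[|]]]] //= _; lra. Qed.

End EdgeInequality.

Lemma abc_term_lt_ga_term (R : rcfType) (a b : R) : 1 <= a -> 1 <= b ->
  (a + b - 2) * (a + b) ^+ 2 < 4 * (a * b) ^+ 2 ->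
  Num.sqrt ((a + b - 2) / (a * b)) < 2 * Num.sqrt (a * b) / (a + b).
Proof.
move=> a_ge1 b_ge1 poly_ineq.
have ab_gt0 : 0 < a * b by rewrite mulr_gt0 //; lra.
have s_gt0 : 0 < a + b by lra.
have u_ge0 : 0 <= (a + b - 2) / (a * b).
  by apply: divr_ge0; [lra | exact: ltW].
have rhs_ge0 : 0 <= 2 * Num.sqrt (a * b) / (a + b).
  by rewrite divr_ge0 ?mulr_ge0 ?sqrtr_ge0 ?(ltW s_gt0).
rewrite -(@ltr_pXn2r _ 2%N) ?nnegrE ?sqrtr_ge0 //.
rewrite sqr_sqrtr // expr_div_n exprMn sqr_sqrtr ?ltW //.
rewrite ltr_pdivrMr // mulrAC ltr_pdivlMr ?exprn_gt0 //.
lra.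
Qed.

Section GraphFacts.

Variables (V : finType) (e : rel V).

Lemma connected_deg_gt0 (x : V) :
  (forall x y, connect e x y) -> (1 < #|V|)%N -> (0 < deg e x)%N.
Proof.
move=> e_conn V_gt1.
have [y /= y_neq_x | no_other] := pickP (predC1 x); last first.
  by move: V_gt1 (cardC1 x); rewrite (eq_card0 no_other); case: #|V| => [|[|]].
have /connectP [[|z p] /= x_path y_last] := e_conn x y.
  by rewrite y_last eqxx in y_neq_x.
by apply/card_gt0P; exists z; rewrite inE; case/andP: x_path.
Qed.

Lemma delta1_le_deg (x : V) : (1 < deg e x)%N -> (delta1 e <= deg e x)%N.
Proof.
by move=> x_nonpendant; rewrite /delta1 -minEnat; exact: (bigmin_le_cond (T := nat)).
Qed.

Lemma deg_le_maxdeg (x : V) : (deg e x <= maxdeg e)%N.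
Proof. exact: leq_bigmax. Qed.

Lemma m_ab_gt0 (x y : V) : e x y -> (deg e x != deg e y)%N ->
  (0 < m_ab e (deg e x) (deg e y))%N.
Proof.
move=> exy neq_deg; rewrite /m_ab (negbTE neq_deg).
by apply/card_gt0P; exists (x, y); rewrite inE /= exy !eqxx.
Qed.

Lemma edge_sum_lt (R : realType) (f g : nat -> nat -> R) (x0 : V) :
  (forall x, exists y, e x y) ->
  (forall x y, e x y -> f (deg e x) (deg e y) < g (deg e x) (deg e y)) ->
  edge_sum e f < edge_sum e g.
Proof.
move=> has_nbr f_lt_g; rewrite /edge_sum ltr_pM2r ?invr_gt0 ?ltr0n //.
apply: ltr_sum; first by apply/hasP; exists x0; rewrite ?mem_index_enum.
move=> x _; have [y exy] := has_nbr x.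
apply: ltr_sum; first by apply/hasP; exists y; rewrite ?mem_index_enum.
by move=> z; exact: f_lt_g.
Qed.

End GraphFacts.

Section TreeEdges.

Variables (R : realDomainType) (V : finType) (e : rel V).
Hypothesis deg_gt0 : forall x : V, (0 < deg e x)%N.
Hypothesis m_1b_eq0 : forall b : nat, (4 <= b)%N -> m_ab e 1 b = 0%N.
Hypothesis deg_gap : (maxdeg e - delta1 e <= (2 * delta1 e - 1) ^ 2)%N.

Lemma pendant_nbr_deg_le3 (x y : V) : e x y -> deg e x = 1%N -> (deg e y <= 3)%N.
Proof.
move=> exy dx1; rewrite leqNgt; apply/negP => dy_ge4.
have neq_deg : deg e x != deg e y by rewrite dx1 neq_ltn (leq_trans _ dy_ge4).
by have := m_ab_gt0 exy neq_deg; rewrite dx1 m_1b_eq0.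
Qed.

Lemma abc_ga_poly_ineq_sorted_edge (x y : V) : e x y -> (deg e x <= deg e y)%N ->
  ((deg e x)%:R + (deg e y)%:R - 2) * ((deg e x)%:R + (deg e y)%:R) ^+ 2
    < 4 * ((deg e x)%:R * (deg e y)%:R) ^+ 2 :> R.
Proof.
move=> exy le_xy; have dx_gt0 := deg_gt0 x.
have [dx1 | dx_neq1] := eqVneq (deg e x) 1%N.
  rewrite dx1; apply: abc_ga_poly_ineq_pendant.
  by rewrite deg_gt0 (pendant_nbr_deg_le3 exy).
have dx_gt1 : (1 < deg e x)%N by rewrite ltn_neqAle eq_sym dx_neq1.
apply: abc_ga_poly_ineq_gap; first by rewrite dx_gt0.
have delta1_le := delta1_le_deg dx_gt1.
apply: leq_trans (leq_trans (leq_sub (deg_le_maxdeg e y) delta1_le) deg_gap) _.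
by rewrite leq_exp2r // leq_sub2r // leq_mul2l.
Qed.

Hypothesis e_sym : symmetric e.

Lemma abc_ga_poly_ineq_edge (x y : V) : e x y ->
  ((deg e x)%:R + (deg e y)%:R - 2) * ((deg e x)%:R + (deg e y)%:R) ^+ 2
    < 4 * ((deg e x)%:R * (deg e y)%:R) ^+ 2 :> R.
Proof.
move=> exy; have [le_xy | /ltnW le_yx] := leqP (deg e x) (deg e y).
  exact: abc_ga_poly_ineq_sorted_edge.
rewrite [(deg e x)%:R + _]addrC [(deg e x)%:R * _]mulrC.
by apply: abc_ga_poly_ineq_sorted_edge; rewrite // e_sym.
Qed.

End TreeEdges.

Theorem theorem3p8 (R : realType) (V : finType) (e : rel V) :
  is_tree e ->
  (3 <= #|V|)%N ->
  (forall b : nat, (4 <= b)%N -> m_ab e 1 b = 0%N) ->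
  (maxdeg e - delta1 e <= (2 * delta1 e - 1) ^ 2)%N ->
  (ABC R e < GA R e)%R.
Proof.
move=> [e_sym [_ [e_conn _]]] V_ge3 m_1b_eq0 deg_gap.
have deg_gt0 x : (0 < deg e x)%N by apply: connected_deg_gt0 => //; exact: ltnW.
have /card_gt0P [x0 _] : (0 < #|[set: V]|)%N by rewrite cardsT (ltn_trans _ V_ge3).
apply: (edge_sum_lt x0) => [x | x y exy].
  by have /card_gt0P [y] := deg_gt0 x; rewrite inE; exists y.
rewrite !natrM !natrD; apply: abc_term_lt_ga_term; rewrite ?ler1n ?deg_gt0 //.
exact: (abc_ga_poly_ineq_edge R deg_gt0 m_1b_eq0 deg_gap e_sym exy).
Qed.
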